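(* Let $f:\mathbb{R}^d\to\mathbb{R}$ be differentiable and run AdaSGD (as defined in the context) with parameters $\eta,\gamma>0$ using a stochastic gradient oracle with bounded affine noise with parameters $\sigma_0,\sigma_1\ge0$. Then for all $1\le s\le T$, $$|\tilde\eta_s-\eta_s|\le\frac{2\tilde\eta_s\sqrt{\sigma_0^2+\sigma_1^2\|\nabla f(w_s)\|^2}}{G_s}.$$
   Context: $\|\cdot\|$ is the Euclidean norm. Oracle: queried at $w$, returns random $g(w)$ with $\mathbb{E}[g(w)\mid w]=\nabla f(w)$ and, with probability one, $\|g(w)-\nabla f(w)\|^2\le\sigma_0^2+\sigma_1^2\|\nabla f(w)\|^2$. AdaSGD: arbitrary $w_1$; for $t=1,\dots,T$, $g_t=g(w_t)$, $G_t=\sqrt{\gamma^2+\sum_{s=1}^t\|g_s\|^2}$ ($G_0=\gamma$), $\eta_t=\eta/G_t$, $w_{t+1}=w_t-\eta_tg_t$. Decorrelated step sizes: $\tilde\eta_t=\eta/\sqrt{G_{t-1}^2+(1+\sigma_1^2)\|\nabla f(w_t)\|^2+\sigma_0^2}$. *)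

From HB Require Import structures.
From mathcomp Require Import all_boot all_order all_algebra.
From mathcomp Require Import all_classical all_reals topology normedtype derive.
Set Implicit Arguments. Unset Strict Implicit. Unset Printing Implicit Defensive.
Import Order.TTheory GRing.Theory Num.Theory.
Import numFieldNormedType.Exports.
Local Open Scope ring_scope.

Definition sqnorm (R : realType) (d : nat) (v : 'rV[R]_d) : R :=
  \sum_(i < d) (v ord0 i) ^+ 2.

Definition enorm (R : realType) (d : nat) (v : 'rV[R]_d) : R :=
  Num.sqrt (sqnorm v).

Definition grad (R : realType) (d : nat) (f : 'rV[R]_d -> R) (w : 'rV[R]_d)
  : 'rV[R]_d :=
  \row_(i < d) (derive (f : 'rV[R]_d -> R^o) w (delta_mx ord0 i)).

Definition adaG (R : realType) (d : nat) (gamma : R) (g : nat -> 'rV[R]_d)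
  (t : nat) : R :=
  Num.sqrt (gamma ^+ 2 + \sum_(1 <= s < t.+1) sqnorm (g s)).

Definition adaeta (R : realType) (d : nat) (eta gamma : R) (g : nat -> 'rV[R]_d)
  (t : nat) : R :=
  eta / adaG gamma g t.

Definition tilde_eta (R : realType) (d : nat) (eta gamma sigma0 sigma1 : R)
  (g : nat -> 'rV[R]_d) (gradw : 'rV[R]_d) (t : nat) : R :=
  eta / Num.sqrt ((adaG gamma g t.-1) ^+ 2
                  + (1 + sigma1 ^+ 2) * sqnorm gradw + sigma0 ^+ 2).

(** Write the decorrelated and the actual step sizes as [eta / A] and [eta / B]
    with [A^2 = G_(s-1)^2 + |grad f(w_s)|^2 + V] and [B^2 = G_(s-1)^2 + |g_s|^2],
    where [V = sigma0^2 + sigma1^2 |grad f(w_s)|^2] bounds [|g_s - grad f(w_s)|^2].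
    The reverse triangle inequality gives [| |g_s| - |grad f(w_s)| | <= sqrt V],
    and squaring turns this into [|A - B| <= 2 sqrt V]; conclude with
    [|eta/A - eta/B| = (eta/A) |A - B| / B]. *)

From HB Require Import structures.
From mathcomp Require Import all_boot all_order all_algebra.
From mathcomp Require Import all_classical all_reals topology normedtype derive.
From mathcomp Require Import ring lra.
Import Order.TTheory GRing.Theory Num.Theory.
Import numFieldNormedType.Exports.
Local Open Scope ring_scope.

Section EuclideanNorm.
Context {R : realType} {d : nat}.
Implicit Types x y : 'rV[R]_d.

Definition dotv x y : R := \sum_(i < d) x ord0 i * y ord0 i.

Lemma sqnorm_ge0 x : 0 <= sqnorm x.
Proof. by apply: sumr_ge0 => i _; exact: sqr_ge0. Qed.

Lemma sqr_enorm x : enorm x ^+ 2 = sqnorm x.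
Proof. exact/sqr_sqrtr/sqnorm_ge0. Qed.

Lemma enorm_ge0 x : 0 <= enorm x.
Proof. exact: sqrtr_ge0. Qed.

Lemma sqnormN x : sqnorm (- x) = sqnorm x.
Proof. by apply: eq_bigr => i _; rewrite mxE sqrrN. Qed.

Lemma sqnormZ (a : R) x : sqnorm (a *: x) = a ^+ 2 * sqnorm x.
Proof. by rewrite /sqnorm mulr_sumr; apply: eq_bigr => i _; rewrite mxE exprMn. Qed.

Lemma sqnormD x y : sqnorm (x + y) = sqnorm x + 2 * dotv x y + sqnorm y.
Proof.
rewrite /sqnorm /dotv mulr_sumr -!big_split /=.
by apply: eq_bigr => i _; rewrite mxE; ring.
Qed.

Lemma sqnorm_eq0 x : (sqnorm x == 0) = (x == 0).
Proof.
rewrite psumr_eq0 => [|i _]; last exact: sqr_ge0.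
apply/allP/eqP => [x0|-> i _]; last by rewrite /= mxE expr0n.
apply/rowP => i; rewrite mxE; apply/eqP.
by rewrite -sqrf_eq0; exact: x0 (mem_index_enum _).
Qed.

Lemma enorm_eq0 x : (enorm x == 0) = (x == 0).
Proof. by rewrite sqrtr_eq0 -sqnorm_eq0 eq_le sqnorm_ge0 andbT. Qed.

Lemma dotvC x y : dotv x y = dotv y x.
Proof. by apply: eq_bigr => i _; rewrite mulrC. Qed.

Lemma dotv0l y : dotv 0 y = 0.
Proof. by apply: big1 => i _; rewrite mxE mul0r. Qed.

Lemma dotv_le_enorm x y : dotv x y <= enorm x * enorm y.
Proof.
have [/eqP|nx_neq0] := eqVneq (enorm x) 0.
  by rewrite enorm_eq0 => /eqP->; rewrite dotv0l mulr_ge0 ?enorm_ge0.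
have [/eqP|ny_neq0] := eqVneq (enorm y) 0.
  by rewrite enorm_eq0 => /eqP->; rewrite dotvC dotv0l mulr_ge0 ?enorm_ge0.
have nxy_gt0 : 0 < enorm x * enorm y.
  by rewrite mulr_gt0 // lt0r ?nx_neq0 ?ny_neq0 enorm_ge0.
(* [0 <= |ny x - nx y|^2 = 2 nx ny (nx ny - dotv x y)] *)
have := sqnorm_ge0 (enorm y *: x - enorm x *: y).
rewrite sqnormD sqnormN !sqnormZ -!sqr_enorm.
have -> : dotv (enorm y *: x) (- (enorm x *: y)) = - (enorm x * enorm y * dotv x y).
  rewrite /dotv -mulNr mulr_sumr; apply: eq_bigr => i _; rewrite !mxE; ring.
move=> expand.
have : 0 <= enorm x * enorm y * (enorm x * enorm y - dotv x y) by nra.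
by rewrite pmulr_rge0 // subr_ge0.
Qed.

Lemma enormD_le x y : enorm (x + y) <= enorm x + enorm y.
Proof.
rewrite -ler_sqr ?nnegrE ?addr_ge0 ?enorm_ge0 //.
rewrite sqr_enorm sqnormD sqrrD !sqr_enorm.
rewrite lerD2r lerD2l mulr2n mulrDl mul1r lerD //; exact: dotv_le_enorm.
Qed.

Lemma enorm_dist x y : `|enorm x - enorm y| <= enorm (x - y).
Proof.
have enormB (z t : 'rV[R]_d) : enorm (z - t) = enorm (t - z).
  by rewrite /enorm -(sqnormN (t - z)) opprB.
have le_dist (z t : 'rV[R]_d) : enorm z <= enorm t + enorm (z - t).
  by rewrite -{1}(subrK t z) addrC enormD_le.
rewrite ler_distl lerBlDr enormB; apply/andP; split; first exact: le_dist.
by rewrite -enormB le_dist.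
Qed.

End EuclideanNorm.

Section ScalarBounds.
Context {R : realType}.

Lemma dist_sqrt_shift (c p q v : R) :
  0 <= c -> 0 <= p -> 0 <= q -> 0 <= v -> `|p - q| <= v ->
  `|Num.sqrt (c + q ^+ 2 + v ^+ 2) - Num.sqrt (c + p ^+ 2)| <= 2 * v.
Proof.
move=> c0 p0 q0 v0; rewrite ler_distl => /andP[qp pq].
set A := Num.sqrt _; set B := Num.sqrt _.
have A0 : 0 <= A := sqrtr_ge0 _; have B0 : 0 <= B := sqrtr_ge0 _.
have sqA : A ^+ 2 = c + q ^+ 2 + v ^+ 2 by rewrite sqr_sqrtr //; nra.
have sqB : B ^+ 2 = c + p ^+ 2 by rewrite sqr_sqrtr //; nra.
have le_sqr (a b : R) : 0 <= b -> a ^+ 2 <= b ^+ 2 -> a <= b.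
  move=> b0 ab; apply: le_trans (ler_norm a) _.
  by rewrite -(ger0_norm b0) -!sqrtr_sqr; exact: ler_wsqrtr.
have qA : q <= A by apply: le_sqr => //; nra.
have pB : p <= B by apply: le_sqr => //; nra.
rewrite ler_distl; apply/andP; split.
- rewrite lerBlDr; apply: le_sqr; first lra.
  by rewrite sqB; nra.
- by apply: le_sqr; [lra | rewrite sqA; nra].
Qed.

Lemma dist_div (eta a b : R) : 0 <= eta -> 0 < a -> 0 < b ->
  `|eta / a - eta / b| = eta / a * `|a - b| / b.
Proof.
move=> eta0 a0 b0.
have -> : eta / a - eta / b = eta / a * (b - a) / b.
  by field; rewrite !gt_eqF.
by rewrite !normrM distrC !normfV ger0_norm // (gtr0_norm a0) (gtr0_norm b0).
Qed.

End ScalarBounds.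

Section AdaGrad.
Context {R : realType} {d : nat} (gamma : R) (g : nat -> 'rV[R]_d).

Lemma adaG_gt0 t : 0 < gamma -> 0 < adaG gamma g t.
Proof.
move=> gamma0; rewrite sqrtr_gt0 ltr_pwDl ?exprn_gt0 //.
by apply: sumr_ge0 => i _; exact: sqnorm_ge0.
Qed.

Lemma adaGS t :
  adaG gamma g t.+1 = Num.sqrt (adaG gamma g t ^+ 2 + enorm (g t.+1) ^+ 2).
Proof.
rewrite /adaG [in LHS]big_nat_recr //= addrA sqr_sqrtr ?sqr_enorm //.
by rewrite addr_ge0 ?sqr_ge0 // sumr_ge0 // => i _; exact: sqnorm_ge0.
Qed.

End AdaGrad.

Theorem lemma11 (R : realType) (d : nat) (f : 'rV[R]_d -> R)
  (eta gamma sigma0 sigma1 : R) (T : nat)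
  (w : nat -> 'rV[R]_d) (g : nat -> 'rV[R]_d) :
  (forall x : 'rV[R]_d, differentiable (f : 'rV[R]_d -> R^o) x) ->
  0 < eta -> 0 < gamma -> 0 <= sigma0 -> 0 <= sigma1 ->
  (* oracle outputs g_t = g(w_t) obey the (almost sure) affine noise bound *)
  (forall t, (1 <= t <= T)%N ->
     sqnorm (g t - grad f (w t))
       <= sigma0 ^+ 2 + sigma1 ^+ 2 * sqnorm (grad f (w t))) ->
  (* AdaSGD recursion w_{t+1} = w_t - eta_t g_t, w_1 arbitrary *)
  (forall t, (1 <= t <= T)%N -> w t.+1 = w t - adaeta eta gamma g t *: g t) ->
  forall s, (1 <= s <= T)%N ->
    `| tilde_eta eta gamma sigma0 sigma1 g (grad f (w s)) s
       - adaeta eta gamma g s |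
    <= 2 * tilde_eta eta gamma sigma0 sigma1 g (grad f (w s)) s
         * Num.sqrt (sigma0 ^+ 2 + sigma1 ^+ 2 * sqnorm (grad f (w s)))
         / adaG gamma g s.
Proof.
move=> _ eta0 gamma0 _ _ noise _ [//|t] /noise.
rewrite /tilde_eta /adaeta /=.
set y := grad f _; set V := _ + _ * sqnorm y => noise_t.
have V0 : 0 <= V.
  by apply: addr_ge0; [exact: sqr_ge0 | exact: mulr_ge0 (sqr_ge0 _) (sqnorm_ge0 _)].
have -> : adaG gamma g t ^+ 2 + (1 + sigma1 ^+ 2) * sqnorm y + sigma0 ^+ 2
        = adaG gamma g t ^+ 2 + enorm y ^+ 2 + Num.sqrt V ^+ 2.
  by rewrite sqr_enorm sqr_sqrtr // /V; ring.
have A0 : 0 < Num.sqrt (adaG gamma g t ^+ 2 + enorm y ^+ 2 + Num.sqrt V ^+ 2).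
  by rewrite sqrtr_gt0 !ltr_wpDr ?sqr_ge0 ?exprn_gt0 ?adaG_gt0.
have B0 := adaG_gt0 gamma g t.+1 gamma0.
rewrite dist_div ?(ltW eta0) // ler_wpM2r ?invr_ge0 ?(ltW B0) //.
rewrite [leRHS]mulrAC [leRHS]mulrC ler_wpM2l ?divr_ge0 ?(ltW eta0) ?(ltW A0) //.
rewrite adaGS dist_sqrt_shift ?sqr_ge0 ?enorm_ge0 ?sqrtr_ge0 //.
apply: le_trans (enorm_dist _ _) _.
by rewrite ler_sqrt.
Qed.
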